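(* Assume Hypothesis (H). Let $b=b_1+b_2$ where $b_1,b_2:\mathbb R^n\times\mathbb R^n\to\mathbb R^n$ are bilinear with $b_i(x,y)\geq 0$ for all $x,y\geq 0$, and let $M=N-P$ where $N$ is an M-matrix and $P\geq 0$. Let $x_0$ satisfy $0\leq x_0\leq x_\ast$ and $F(x_0)\leq 0$ (e.g. $x_0=0$), and consider the iteration $$\big(N-b_1(\cdot,x_k)\big)x_{k+1}=a+Px_k+b_2(x_k,x_k),\quad k\geq 0.$$ Then: (1) $N-b_1(\cdot,x_k)$ is nonsingular for all $k$, so the iteration is well defined; (2) $x_k\leq x_{k+1}\leq x_\ast$ for all $k$, and $x_k\to x_\ast$ as $k\to\infty$; (3) $F(x_k)\leq 0$ for all $k$.
   Context: Inequalities between vectors/matrices are componentwise. A Z-matrix is a real square matrix with nonpositive off-diagonal entries; an M-matrix is a matrix $sI-P$ with $P\geq0$ entrywise and $s\geq\rho(P)$ ($\rho$ = spectral radius). Let $M\in\mathbb R^{n\times n}$ be a nonsingular M-matrix, $a\in\mathbb R^n$ with $a\geq 0$, and $b:\mathbb R^n\times\mathbb R^n\to\mathbb R^n$ a bilinear map (not necessarily symmetric) with $b(x,y)\geq 0$ whenever $x,y\geq 0$. A solution of $Mx=a+b(x,x)$ means a vector $x\geq 0$ satisfying it; a solution $x_\ast$ is minimal if $x_\ast\leq y$ for every solution $y$. $F(x):=Mx-a-b(x,x)$. For a bilinear map $c$ and $x\in\mathbb R^n$, $c(x,\cdot)$ and $c(\cdot,x)$ denote the $n\times n$ matrices of $y\mapsto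 c(x,y)$ and $y\mapsto c(y,x)$; $F'_x:=M-b(x,\cdot)-b(\cdot,x)$. Hypothesis (H): the equation has a minimal solution $x_\ast$, $x_\ast>0$ (all components strictly positive), and either $F'_{x_\ast}$ is nonsingular, or $F'_{x_\ast}$ is irreducible and $F'_x\neq F'_{x_\ast}$ for every $x$ with $0\leq x\leq x_\ast$, $x\neq x_\ast$. *)

From Stdlib Require Import Reals Lra Lia.
Open Scope R_scope.

(* Vectors in R^n are functions nat -> R (only indices i < n matter);
   n x n matrices are functions nat -> nat -> R (only i, j < n matter). *)
Definition vec := nat -> R.
Definition mat := nat -> nat -> R.

Fixpoint vsum (n : nat) (f : nat -> R) : R :=
  match n with O => 0 | S m => vsum m f + f m end.

Definition mv (n : nat) (A : mat) (x : vec) : vec :=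
  fun i => vsum n (fun j => A i j * x j).

Definition msub (A B : mat) : mat := fun i j => A i j - B i j.
Definition vadd (x y : vec) : vec := fun i => x i + y i.
Definition vsub (x y : vec) : vec := fun i => x i - y i.

Definition vle (n : nat) (x y : vec) : Prop := forall i, (i < n)%nat -> x i <= y i.
Definition vlt (n : nat) (x y : vec) : Prop := forall i, (i < n)%nat -> x i < y i.
Definition vzero : vec := fun _ => 0.
Definition mnonneg (n : nat) (A : mat) : Prop :=
  forall i j, (i < n)%nat -> (j < n)%nat -> 0 <= A i j.
Definition veq (n : nat) (x y : vec) : Prop := forall i, (i < n)%nat -> x i = y i.
Definition meq (n : nat) (A B : mat) : Prop :=
  forall i j, (i < n)%nat -> (j < n)%nat -> A i j = B i j.

(* A bilinear map b : R^n x R^n -> R^n, written through its coefficient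
   tensor: b(x,y)_i = sum_j sum_k B i j k x_j y_k (every bilinear map has
   this form). *)
Definition tensor := nat -> nat -> nat -> R.
Definition bil (n : nat) (B : tensor) (x y : vec) : vec :=
  fun i => vsum n (fun j => vsum n (fun k => B i j k * x j * y k)).
Definition tadd (B1 B2 : tensor) : tensor := fun i j k => B1 i j k + B2 i j k.

(* b(x,.) : the matrix of y |-> b(x,y) *)
Definition bil_l (n : nat) (B : tensor) (x : vec) : mat :=
  fun i k => vsum n (fun j => B i j k * x j).
(* b(.,x) : the matrix of y |-> b(y,x) *)
Definition bil_r (n : nat) (B : tensor) (x : vec) : mat :=
  fun i j => vsum n (fun k => B i j k * x k).

Definition bil_nonneg (n : nat) (B : tensor) : Prop :=
  forall x y, vle n vzero x -> vle n vzero y -> vle n vzero (bil n B x y).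

Definition nonsingular (n : nat) (A : mat) : Prop :=
  forall x, veq n (mv n A x) vzero -> veq n x vzero.

(* Irreducible: there is no nonempty proper index set I with
   A i j = 0 for all i in I, j not in I (i.e. A is not permutation-similar
   to a block upper-triangular matrix). *)
Definition irreducible (n : nat) (A : mat) : Prop :=
  ~ exists S : nat -> bool,
      (exists i, (i < n)%nat /\ S i = true) /\
      (exists j, (j < n)%nat /\ S j = false) /\
      (forall i j, (i < n)%nat -> (j < n)%nat -> S i = true -> S j = false ->
                   A i j = 0).

(* al + i*be is a (complex) eigenvalue of the real matrix P: there is a
   nonzero complex vector u + i v with P(u + i v) = (al + i be)(u + i v). *)
Definition is_cplx_eigenvalue (n : nat) (P : mat) (al be : R) : Prop :=
  exists u v : vec,
    (exists i, (i < n)%nat /\ (u i <> 0 \/ v i <> 0)) /\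
    (forall i, (i < n)%nat ->
        mv n P u i = al * u i - be * v i /\
        mv n P v i = be * u i + al * v i).

(* s >= rho(P), rho = spectral radius = max modulus of the eigenvalues. *)
Definition spec_radius_le (n : nat) (P : mat) (s : R) : Prop :=
  0 <= s /\
  forall al be, is_cplx_eigenvalue n P al be -> al ^ 2 + be ^ 2 <= s ^ 2.

Definition scal_id (s : R) : mat := fun i j => if Nat.eqb i j then s else 0.

Definition is_M_matrix (n : nat) (A : mat) : Prop :=
  exists (s : R) (P : mat),
    mnonneg n P /\ spec_radius_le n P s /\ meq n A (msub (scal_id s) P).

Definition is_solution (n : nat) (M : mat) (a : vec) (B : tensor) (x : vec) : Prop :=
  vle n vzero x /\ veq n (mv n M x) (vadd a (bil n B x x)).

Definition is_minimal_solution (n : nat) (M : mat) (a : vec) (B : tensor) (x : vec) : Prop :=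
  is_solution n M a B x /\ forall y, is_solution n M a B y -> vle n x y.

Definition Fmap (n : nat) (M : mat) (a : vec) (B : tensor) (x : vec) : vec :=
  vsub (vsub (mv n M x) a) (bil n B x x).

Definition Fder (n : nat) (M : mat) (B : tensor) (x : vec) : mat :=
  msub (msub M (bil_l n B x)) (bil_r n B x).

Definition hypH (n : nat) (M : mat) (a : vec) (B : tensor) (xs : vec) : Prop :=
  is_minimal_solution n M a B xs /\ vlt n vzero xs /\
  (nonsingular n (Fder n M B xs) \/
   (irreducible n (Fder n M B xs) /\
    forall x, vle n vzero x -> vle n x xs -> ~ veq n x xs ->
              ~ meq n (Fder n M B x) (Fder n M B xs))).

Definition is_iteration (n : nat) (N P : mat) (a : vec) (B1 B2 : tensor)
    (x0 : vec) (x : nat -> vec) : Prop :=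
  veq n (x O) x0 /\
  forall k, veq n (mv n (msub N (bil_r n B1 (x k))) (x (S k)))
                  (vadd (vadd a (mv n P (x k))) (bil n B2 (x k) (x k))).

From Stdlib Require Import Reals Lra Lia Classical ClassicalEpsilon.
Open Scope R_scope.

(** The heart of the proof is that for [0 <= y <= x*] the Z-matrix
    [A_y = N - b1(.,y)] is monotone ([A_y z >= 0] implies [z >= 0]).  We have
    [A_y x* >= 0]; if [A_y z >= 0] but [z] has a negative entry, shifting [z]
    by a multiple of [x*] until it first touches zero produces a nonempty index
    set [S] with [(A_y x* )_S = 0] and [A_y] block triangular with respect to
    [S].  Zeroing the [S]-entries of [x*] then gives a nonnegative
    supersolution ([F >= 0]) strictly below [x*]; but every nonnegative
    supersolution dominates a solution (Picard iteration), contradicting the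
    minimality of [x*].  The same shift, with the nonsingularity of [M] in
    place of minimality, shows that [M] itself is monotone, which the Picard
    iteration needs.  Monotonicity of [A_(x_k)] yields its nonsingularity
    and, applied to [x_(k+1) - x_k] and [x* - x_(k+1)], the bounds
    [x_k <= x_(k+1) <= x*]; the limit of the iterates is a solution below
    [x*], hence equals [x*]. *)

Lemma vsum_ext n f g : (forall j, (j < n)%nat -> f j = g j) -> vsum n f = vsum n g.
Proof.
  induction n as [|n IH]; intros H; simpl; [reflexivity|].
  rewrite IH by (intros; apply H; lia). rewrite (H n) by lia. reflexivity.
Qed.

Lemma vsum_add n f g : vsum n (fun j => f j + g j) = vsum n f + vsum n g.
Proof. induction n as [|n IH]; simpl; [ring | rewrite IH; ring]. Qed.

Lemma vsum_sub n f g : vsum n (fun j => f j - g j) = vsum n f - vsum n g.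
Proof. induction n as [|n IH]; simpl; [ring | rewrite IH; ring]. Qed.

Lemma vsum_scal_l n c f : vsum n (fun j => c * f j) = c * vsum n f.
Proof. induction n as [|n IH]; simpl; [ring | rewrite IH; ring]. Qed.

Lemma vsum_scal_r n c f : vsum n (fun j => f j * c) = vsum n f * c.
Proof. induction n as [|n IH]; simpl; [ring | rewrite IH; ring]. Qed.

Lemma vsum_eq0 n f : (forall j, (j < n)%nat -> f j = 0) -> vsum n f = 0.
Proof.
  induction n as [|n IH]; intros H; simpl; [reflexivity|].
  rewrite IH by (intros; apply H; lia). rewrite (H n) by lia. ring.
Qed.

Lemma vsum_le n f g : (forall j, (j < n)%nat -> f j <= g j) -> vsum n f <= vsum n g.
Proof.
  induction n as [|n IH]; intros H; simpl; [lra|].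
  assert (f n <= g n) by (apply H; lia).
  assert (vsum n f <= vsum n g) by (apply IH; intros; apply H; lia).
  lra.
Qed.

Lemma vsum_nonneg n f : (forall j, (j < n)%nat -> 0 <= f j) -> 0 <= vsum n f.
Proof.
  intros H. replace 0 with (vsum n (fun _ => 0)) by (apply vsum_eq0; auto).
  apply vsum_le, H.
Qed.

Lemma vsum_nonpos n f : (forall j, (j < n)%nat -> f j <= 0) -> vsum n f <= 0.
Proof.
  intros H. replace 0 with (vsum n (fun _ => 0)) by (apply vsum_eq0; auto).
  apply vsum_le, H.
Qed.

Lemma vsum_nonpos_eq0 n f :
  (forall j, (j < n)%nat -> f j <= 0) -> vsum n f = 0 -> forall j, (j < n)%nat -> f j = 0.
Proof.
  induction n as [|n IH]; simpl; intros Hf Hs j Hj; [lia|].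
  assert (vsum n f <= 0) by (apply vsum_nonpos; intros; apply Hf; lia).
  assert (f n <= 0) by (apply Hf; lia).
  destruct (Nat.eq_dec j n) as [->|Hjn]; [lra|].
  apply IH; [intros; apply Hf; lia | lra | lia].
Qed.

Lemma vsum_delta n f j :
  (j < n)%nat -> vsum n (fun l => f l * (if Nat.eqb l j then 1 else 0)) = f j.
Proof.
  induction n as [|n IH]; simpl; intros Hj; [lia|].
  destruct (Nat.eq_dec j n) as [->|Hjn].
  - rewrite Nat.eqb_refl, vsum_eq0; [ring|].
    intros l Hl. destruct (Nat.eqb_spec l n); [lia | ring].
  - rewrite IH by lia. destruct (Nat.eqb_spec n j); [lia | ring].
Qed.

Lemma vle_refl n x : vle n x x.
Proof. intros i _. apply Rle_refl. Qed.

Lemma vle_trans n x y z : vle n x y -> vle n y z -> vle n x z.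
Proof. intros H1 H2 i Hi. specialize (H1 i Hi). specialize (H2 i Hi). lra. Qed.

Lemma vle_vsub n x y : vle n x y -> vle n vzero (vsub y x).
Proof. intros H i Hi. specialize (H i Hi). unfold vsub, vzero. lra. Qed.

Lemma not_vle0_exists n y : ~ vle n vzero y -> exists i, (i < n)%nat /\ y i < 0.
Proof.
  intros H. apply NNPP. intros Hno. apply H. intros i Hi. unfold vzero.
  apply Rnot_lt_le. intros Hlt. apply Hno. exists i. auto.
Qed.

Lemma mv_ext n A x y i : veq n x y -> mv n A x i = mv n A y i.
Proof. intros H. apply vsum_ext. intros j Hj. rewrite H by exact Hj. reflexivity. Qed.

Lemma mv_zero n A i : mv n A vzero i = 0.
Proof. apply vsum_eq0. intros j _. unfold vzero. ring. Qed.

Lemma mv_vsub n A x y i : mv n A (vsub x y) i = mv n A x i - mv n A y i.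
Proof. unfold mv, vsub. rewrite <- vsum_sub. apply vsum_ext. intros; ring. Qed.

Lemma mv_msub n A B x i : mv n (msub A B) x i = mv n A x i - mv n B x i.
Proof. unfold mv, msub. rewrite <- vsum_sub. apply vsum_ext. intros; ring. Qed.

Lemma mv_split n M N P x i :
  meq n M (msub N P) -> (i < n)%nat -> mv n N x i = mv n M x i + mv n P x i.
Proof.
  intros H Hi. unfold mv. rewrite <- vsum_add. apply vsum_ext. intros j Hj.
  rewrite H by assumption. unfold msub. ring.
Qed.

Lemma mv_nonneg n A x i : mnonneg n A -> vle n vzero x -> (i < n)%nat -> 0 <= mv n A x i.
Proof.
  intros HA Hx Hi. apply vsum_nonneg. intros j Hj.
  apply Rmult_le_pos; [apply HA; assumption | exact (Hx j Hj)].
Qed.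

Lemma mv_mono n A x y i : mnonneg n A -> vle n x y -> (i < n)%nat -> mv n A x i <= mv n A y i.
Proof.
  intros HA H Hi. pose proof (mv_nonneg n A (vsub y x) i HA (vle_vsub n x y H) Hi).
  rewrite mv_vsub in *. lra.
Qed.

Lemma bil_ext n B x x' y y' i : veq n x x' -> veq n y y' -> bil n B x y i = bil n B x' y' i.
Proof.
  intros Hx Hy. apply vsum_ext. intros j Hj. apply vsum_ext. intros k Hk.
  rewrite Hx, Hy by assumption. reflexivity.
Qed.

Lemma bil_vsub_l n B x x' y i : bil n B (vsub x x') y i = bil n B x y i - bil n B x' y i.
Proof.
  unfold bil, vsub. rewrite <- vsum_sub. apply vsum_ext. intros j _.
  rewrite <- vsum_sub. apply vsum_ext. intros; ring.
Qed.

Lemma bil_vsub_r n B x y y' i : bil n B x (vsub y y') i = bil n B x y i - bil n B x y' i.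
Proof.
  unfold bil, vsub. rewrite <- vsum_sub. apply vsum_ext. intros j _.
  rewrite <- vsum_sub. apply vsum_ext. intros; ring.
Qed.

Lemma bil_tadd n B1 B2 x y i : bil n (tadd B1 B2) x y i = bil n B1 x y i + bil n B2 x y i.
Proof.
  unfold bil, tadd. rewrite <- vsum_add. apply vsum_ext. intros j _.
  rewrite <- vsum_add. apply vsum_ext. intros; ring.
Qed.

Lemma mv_bil_r n B x y i : mv n (bil_r n B y) x i = bil n B x y i.
Proof.
  apply vsum_ext. intros j _. unfold bil_r. rewrite <- vsum_scal_r.
  apply vsum_ext. intros; ring.
Qed.

Lemma bil_nonneg_tadd n B1 B2 :
  bil_nonneg n B1 -> bil_nonneg n B2 -> bil_nonneg n (tadd B1 B2).
Proof.
  intros H1 H2 x y Hx Hy i Hi. pose proof (H1 x y Hx Hy i Hi). pose proof (H2 x y Hx Hy i Hi).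
  unfold vzero in *. rewrite bil_tadd. lra.
Qed.

Lemma bil_mono n B x x' y y' i :
  bil_nonneg n B -> vle n vzero x -> vle n x x' -> vle n vzero y -> vle n y y' ->
  (i < n)%nat -> bil n B x y i <= bil n B x' y' i.
Proof.
  intros HB Hx Hxx Hy Hyy Hi.
  pose proof (HB (vsub x' x) y' (vle_vsub n x x' Hxx) (vle_trans n _ _ _ Hy Hyy) i Hi).
  pose proof (HB x (vsub y' y) Hx (vle_vsub n y y' Hyy) i Hi).
  unfold vzero in *. rewrite bil_vsub_l in *. rewrite bil_vsub_r in *. lra.
Qed.

Definition evec (j : nat) : vec := fun l => if Nat.eqb l j then 1 else 0.

Lemma evec_nonneg n j : vle n vzero (evec j).
Proof. intros l _. unfold evec, vzero. destruct (Nat.eqb l j); lra. Qed.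

Lemma bil_coef_nonneg n B i j k :
  bil_nonneg n B -> (i < n)%nat -> (j < n)%nat -> (k < n)%nat -> 0 <= B i j k.
Proof.
  intros HB Hi Hj Hk.
  pose proof (HB (evec j) (evec k) (evec_nonneg n j) (evec_nonneg n k) i Hi) as H.
  unfold bil, vzero, evec in H.
  rewrite (vsum_ext n _ (fun l => B i l k * (if Nat.eqb l j then 1 else 0))) in H.
  - rewrite (vsum_delta n (fun l => B i l k) j Hj) in H. exact H.
  - intros l _. rewrite <- (vsum_delta n (fun p => B i l p * (if Nat.eqb l j then 1 else 0)) k Hk).
    apply vsum_ext. intros; ring.
Qed.

Lemma Fmap_ext n M a B x y i : veq n x y -> Fmap n M a B x i = Fmap n M a B y i.
Proof.
  intros H. unfold Fmap, vsub. rewrite (mv_ext n M x y i H), (bil_ext n B x y x y i H H).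
  reflexivity.
Qed.

(* Eliminate the last unknown [m] with the pivot row [r]; [tau] moves the last
   row into the slot of [r]. *)
Lemma gauss_step m (A : mat) r (c x' : vec) :
  (r < S m)%nat -> A r m <> 0 ->
  let tau := fun i => if Nat.eqb i r then m else i in
  veq m (mv m (fun i j => A (tau i) j - A (tau i) m * A r j / A r m) x')
        (fun i => c (tau i) - A (tau i) m * c r / A r m) ->
  veq (S m) (mv (S m) A (fun j => if Nat.eqb j m
                                  then (c r - vsum m (fun j => A r j * x' j)) / A r m
                                  else x' j)) c.
Proof.
  intros Hr Hp tau Hx i Hi. unfold mv. simpl. rewrite Nat.eqb_refl.
  rewrite (vsum_ext m _ (fun j => A i j * x' j))
    by (intros j Hj; destruct (Nat.eqb_spec j m); [lia | reflexivity]).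
  destruct (Nat.eq_dec i r) as [->|Hir]; [field; exact Hp|].
  assert (Htau : exists i', (i' < m)%nat /\ tau i' = i).
  { unfold tau. destruct (Nat.eq_dec i m) as [->|Him].
    - exists r. split; [lia | now rewrite Nat.eqb_refl].
    - exists i. split; [lia|]. destruct (Nat.eqb_spec i r); [lia | reflexivity]. }
  destruct Htau as [i' [Hi' Ht]].
  specialize (Hx i' Hi'). unfold mv in Hx.
  rewrite (vsum_ext m _ (fun j => A (tau i') j * x' j - A (tau i') m / A r m * (A r j * x' j)))
    in Hx by (intros; field; exact Hp).
  rewrite vsum_sub, vsum_scal_l, Ht in Hx.
  replace (vsum m (fun j => A i j * x' j))
    with (c i - A i m * c r / A r m + A i m / A r m * vsum m (fun j => A r j * x' j)) by lra.
  field. exact Hp.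
Qed.

Lemma solvable_or_singular n (A : mat) (c : vec) :
  (exists x, veq n (mv n A x) c) \/
  (exists x, veq n (mv n A x) vzero /\ exists i, (i < n)%nat /\ x i <> 0).
Proof.
  revert A c. induction n as [|m IH]; intros A c.
  - left. exists vzero. intros i Hi. lia.
  - destruct (classic (exists r, (r < S m)%nat /\ A r m <> 0)) as [[r [Hr Hp]]|Hno].
    + set (tau := fun i => if Nat.eqb i r then m else i).
      destruct (IH (fun i j => A (tau i) j - A (tau i) m * A r j / A r m)
                   (fun i => c (tau i) - A (tau i) m * c r / A r m))
        as [[x' Hx']|[x' [Hx' [i' [Hi' Hne]]]]].
      * left. eexists. exact (gauss_step m A r c x' Hr Hp Hx').
      * right. eexists. split.
        -- apply (gauss_step m A r vzero x' Hr Hp). intros i Hi.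
           rewrite Hx' by exact Hi. unfold vzero. field. exact Hp.
        -- exists i'. split; [lia|]. destruct (Nat.eqb_spec i' m); [lia | exact Hne].
    + right. exists (evec m). split.
      * intros i Hi. unfold mv, evec. rewrite (vsum_delta (S m) (fun l => A i l) m) by lia.
        destruct (Req_dec (A i m) 0) as [|Hne]; [assumption|].
        exfalso. apply Hno. exists i. auto.
      * exists m. split; [lia|]. unfold evec. rewrite Nat.eqb_refl. lra.
Qed.

Lemma nonsingular_solvable n A : nonsingular n A -> forall c, exists x, veq n (mv n A x) c.
Proof.
  intros H c. destruct (solvable_or_singular n A c) as [|[x [Hx [i [Hi Hne]]]]]; [assumption|].
  exfalso. apply Hne. exact (H x Hx i Hi).
Qed.

Definition solve n (A : mat) (c : vec) : vec :=
  epsilon (inhabits vzero) (fun z => veq n (mv n A z) c).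

Lemma solve_spec n A c : nonsingular n A -> veq n (mv n A (solve n A c)) c.
Proof.
  intros H. apply (epsilon_spec (inhabits vzero) (fun z => veq n (mv n A z) c)).
  apply nonsingular_solvable, H.
Qed.

Definition Zmat n (A : mat) : Prop :=
  forall i j, (i < n)%nat -> (j < n)%nat -> i <> j -> A i j <= 0.

Definition monotone n (A : mat) : Prop :=
  forall y, vle n vzero (mv n A y) -> vle n vzero y.

Lemma is_M_matrix_Zmat n A : is_M_matrix n A -> Zmat n A.
Proof.
  intros [s [P [HP [_ HA]]]] i j Hi Hj Hij. rewrite HA by assumption.
  unfold msub, scal_id. destruct (Nat.eqb_spec i j); [contradiction|].
  specialize (HP i j Hi Hj). lra.
Qed.

Lemma monotone_le n A x y :
  monotone n A -> (forall i, (i < n)%nat -> mv n A x i <= mv n A y i) -> vle n x y.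
Proof.
  intros HA H i Hi.
  assert (Hyx : vle n vzero (vsub y x)).
  { apply HA. intros j Hj. rewrite mv_vsub. specialize (H j Hj). unfold vzero. lra. }
  specialize (Hyx i Hi). unfold vsub, vzero in Hyx. lra.
Qed.

Lemma monotone_nonsingular n A : monotone n A -> nonsingular n A.
Proof.
  intros HA y Hy i Hi.
  assert (H1 : vle n vzero y).
  { apply (monotone_le n A). exact HA. intros j Hj. rewrite mv_zero, Hy by exact Hj. apply Rle_refl. }
  assert (H2 : vle n y vzero).
  { apply (monotone_le n A). exact HA. intros j Hj. rewrite mv_zero, Hy by exact Hj. apply Rle_refl. }
  specialize (H1 i Hi). specialize (H2 i Hi). unfold vzero in *. lra.
Qed.

Lemma exists_argmax n (f : nat -> R) :
  (0 < n)%nat -> exists i0, (i0 < n)%nat /\ forall i, (i < n)%nat -> f i <= f i0.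
Proof.
  induction n as [|n IH]; intros Hn; [lia|]. destruct n as [|n].
  - exists 0%nat. split; [lia|]. intros i Hi. replace i with 0%nat by lia. lra.
  - destruct IH as [i0 [Hi0 H]]; [lia|].
    destruct (Rle_dec (f i0) (f (S n))).
    + exists (S n). split; [lia|]. intros i Hi. destruct (Nat.eq_dec i (S n)) as [->|]; [lra|].
      specialize (H i ltac:(lia)). lra.
    + exists i0. split; [lia|]. intros i Hi. destruct (Nat.eq_dec i (S n)) as [->|]; [lra|].
      apply H. lia.
Qed.

Lemma Zmat_row_at_zero n A z i :
  Zmat n A -> vle n vzero z -> (i < n)%nat -> z i = 0 -> 0 <= mv n A z i ->
  forall j, (j < n)%nat -> A i j * z j = 0.
Proof.
  intros HA Hz Hi Hzi HAz.
  assert (Hterm : forall j, (j < n)%nat -> A i j * z j <= 0).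
  { intros j Hj. destruct (Nat.eq_dec i j) as [<-|Hij]; [rewrite Hzi; lra|].
    pose proof (HA i j Hi Hj Hij). pose proof (Hz j Hj). unfold vzero in *. nra. }
  apply (vsum_nonpos_eq0 n (fun j => A i j * z j) Hterm).
  pose proof (vsum_nonpos n _ Hterm). unfold mv in HAz. lra.
Qed.

(* Shift [y] by [t v] with the least [t] making it nonnegative; [S] is where
   [y + t v] vanishes. *)
Lemma Zmat_null_block n A v y :
  Zmat n A -> vlt n vzero v -> vle n vzero (mv n A v) -> vle n vzero (mv n A y) ->
  (exists i, (i < n)%nat /\ y i < 0) ->
  exists S : nat -> bool,
    (exists i0, (i0 < n)%nat /\ S i0 = true) /\
    (forall i, (i < n)%nat -> S i = true -> mv n A v i = 0) /\
    (forall i j, (i < n)%nat -> (j < n)%nat -> S i = true -> S j = false -> A i j = 0).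
Proof.
  intros HA Hv HAv HAy [i1 [Hi1 Hy1]].
  destruct (exists_argmax n (fun i => - y i / v i)) as [i0 [Hi0 Hmax]]; [lia|].
  set (t := - y i0 / v i0) in *.
  set (z := fun j => y j + t * v j).
  assert (Ht : 0 < t).
  { specialize (Hmax i1 Hi1). specialize (Hv i1 Hi1). unfold vzero in Hv.
    assert (0 < - y i1 / v i1) by (apply Rdiv_lt_0_compat; lra). lra. }
  assert (Hz : forall j, (j < n)%nat -> 0 <= z j).
  { intros j Hj. specialize (Hmax j Hj). specialize (Hv j Hj). unfold vzero in Hv. unfold z.
    assert (- y j / v j * v j <= t * v j) by (apply Rmult_le_compat_r; lra).
    replace (- y j / v j * v j) with (- y j) in * by (field; lra). lra. }
  assert (Hrow : forall i, (i < n)%nat -> z i = 0 ->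
            mv n A v i = 0 /\ forall j, (j < n)%nat -> A i j * z j = 0).
  { intros i Hi Hzi.
    assert (Hsplit : mv n A z i = mv n A y i + t * mv n A v i).
    { unfold mv, z. rewrite <- vsum_scal_l, <- vsum_add. apply vsum_ext. intros; ring. }
    specialize (HAy i Hi). specialize (HAv i Hi). unfold vzero in HAy, HAv.
    assert (0 <= t * mv n A v i) by (apply Rmult_le_pos; lra).
    assert (Hterms := Zmat_row_at_zero n A z i HA Hz Hi Hzi ltac:(lra)).
    assert (HAz : mv n A z i = 0) by exact (vsum_eq0 n _ Hterms).
    split; [|exact Hterms].
    assert (Hprod : t * mv n A v i = 0) by lra.
    destruct (Rmult_integral _ _ Hprod); [lra | assumption]. }
  exists (fun j => if Req_dec_T (z j) 0 then true else false). cbv beta.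
  split; [|split].
  - exists i0. split; [exact Hi0|].
    destruct (Req_dec_T (z i0) 0) as [|Hne]; [reflexivity|].
    exfalso. apply Hne. specialize (Hv i0 Hi0). unfold vzero in Hv. unfold z, t. field. lra.
  - intros i Hi HSi. destruct (Req_dec_T (z i) 0) as [Hzi|]; [|discriminate].
    exact (proj1 (Hrow i Hi Hzi)).
  - intros i j Hi Hj HSi HSj.
    destruct (Req_dec_T (z i) 0) as [Hzi|]; [|discriminate].
    destruct (Req_dec_T (z j) 0) as [|Hzj]; [discriminate|].
    destruct (Rmult_integral _ _ (proj2 (Hrow i Hi Hzi) j Hj)); [assumption | contradiction].
Qed.

Lemma nonsingular_block_kernel n (A : mat) (S : nat -> bool) u :
  nonsingular n A ->
  (forall i j, (i < n)%nat -> (j < n)%nat -> S i = true -> S j = false -> A i j = 0) ->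
  (forall j, (j < n)%nat -> S j = false -> u j = 0) ->
  (forall i, (i < n)%nat -> S i = true -> mv n A u i = 0) ->
  veq n u vzero.
Proof.
  intros HA Hblock Hu HAu.
  (* [A'] is the identity on the rows of [S] and [A] restricted to the
     complement of [S] elsewhere; it inherits nonsingularity from [A], and
     solving [A' w = A u] off [S] gives [A (u - w) = 0]. *)
  set (A' := fun i j => if S i then (if Nat.eqb j i then 1 else 0)
                        else if S j then 0 else A i j).
  assert (HA'S : forall w i, (i < n)%nat -> S i = true -> mv n A' w i = w i).
  { intros w i Hi HSi. unfold mv, A'. rewrite HSi.
    rewrite <- (vsum_delta n w i Hi). apply vsum_ext. intros; ring. }
  assert (HA'A : forall w, (forall j, (j < n)%nat -> S j = true -> w j = 0) ->
            forall i, (i < n)%nat -> mv n A w i = if S i then 0 else mv n A' w i).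
  { intros w Hw i Hi. unfold mv, A'. destruct (S i) eqn:HSi.
    - apply vsum_eq0. intros j Hj. destruct (S j) eqn:HSj.
      + rewrite (Hw j Hj HSj). ring.
      + rewrite (Hblock i j Hi Hj HSi HSj). ring.
    - apply vsum_ext. intros j Hj.
      destruct (S j) eqn:HSj; [rewrite (Hw j Hj HSj); ring | reflexivity]. }
  assert (HA' : nonsingular n A').
  { intros w Hw.
    assert (HwS : forall j, (j < n)%nat -> S j = true -> w j = 0)
      by (intros j Hj HSj; rewrite <- (HA'S w j Hj HSj); exact (Hw j Hj)).
    apply HA. intros i Hi. rewrite (HA'A w HwS i Hi).
    destruct (S i); [reflexivity | exact (Hw i Hi)]. }
  destruct (nonsingular_solvable n A' HA' (fun i => if S i then 0 else mv n A u i)) as [w Hw].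
  assert (HwS : forall j, (j < n)%nat -> S j = true -> w j = 0).
  { intros j Hj HSj. rewrite <- (HA'S w j Hj HSj), (Hw j Hj), HSj. reflexivity. }
  assert (Huw : veq n (vsub u w) vzero).
  { apply HA. intros i Hi. rewrite mv_vsub, (HA'A w HwS i Hi), (Hw i Hi). unfold vzero.
    destruct (S i) eqn:HSi; [rewrite (HAu i Hi HSi)|]; ring. }
  intros j Hj. specialize (Huw j Hj). unfold vsub, vzero in *.
  destruct (S j) eqn:HSj; [rewrite (HwS j Hj HSj) in Huw; lra | exact (Hu j Hj HSj)].
Qed.

Lemma nonsingular_Zmat_monotone n A v :
  Zmat n A -> nonsingular n A -> vlt n vzero v -> vle n vzero (mv n A v) -> monotone n A.
Proof.
  intros HZ HA Hv HAv y Hy. apply NNPP. intros Hneg. apply not_vle0_exists in Hneg.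
  destruct (Zmat_null_block n A v y HZ Hv HAv Hy Hneg) as [S [[i0 [Hi0 HSi0]] [HAvS Hblock]]].
  set (u := fun j => if S j then v j else 0).
  assert (Hu : veq n u vzero).
  { apply (nonsingular_block_kernel n A S u HA Hblock).
    - intros j _ HSj. unfold u. rewrite HSj. reflexivity.
    - intros i Hi HSi. rewrite <- (HAvS i Hi HSi). apply vsum_ext. intros j Hj. unfold u.
      destruct (S j) eqn:HSj; [reflexivity|]. rewrite (Hblock i j Hi Hj HSi HSj). ring. }
  specialize (Hu i0 Hi0). specialize (Hv i0 Hi0). unfold u, vzero in *.
  rewrite HSi0 in Hu. lra.
Qed.

Lemma cv_const c : Un_cv (fun _ => c) c.
Proof. intros eps Heps. exists 0%nat. intros. unfold Rdist. rewrite Rminus_diag, Rabs_R0. exact Heps. Qed.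

Lemma cv_shift u l : Un_cv u l -> Un_cv (fun k => u (S k)) l.
Proof. intros H eps Heps. destruct (H eps Heps) as [K HK]. exists K. intros k Hk. apply HK. lia. Qed.

Lemma cv_ext u v l : (forall k, u k = v k) -> Un_cv u l -> Un_cv v l.
Proof. intros H Hu eps Heps. destruct (Hu eps Heps) as [K HK]. exists K. intros k Hk. rewrite <- H. auto. Qed.

Lemma cv_vsum n (f : nat -> nat -> R) g :
  (forall j, (j < n)%nat -> Un_cv (fun k => f k j) (g j)) ->
  Un_cv (fun k => vsum n (f k)) (vsum n g).
Proof.
  induction n as [|n IH]; intros H; simpl; [apply cv_const|].
  apply CV_plus; [apply IH; intros; apply H; lia | apply H; lia].
Qed.

Lemma cv_mv n A (x : nat -> vec) l i :
  (forall j, (j < n)%nat -> Un_cv (fun k => x k j) (l j)) ->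
  Un_cv (fun k => mv n A (x k) i) (mv n A l i).
Proof.
  intros H. apply (cv_vsum n (fun k j => A i j * x k j)). intros j Hj.
  apply CV_mult; [apply cv_const | exact (H j Hj)].
Qed.

Lemma cv_bil n B (x y : nat -> vec) lx ly i :
  (forall j, (j < n)%nat -> Un_cv (fun k => x k j) (lx j)) ->
  (forall j, (j < n)%nat -> Un_cv (fun k => y k j) (ly j)) ->
  Un_cv (fun k => bil n B (x k) (y k) i) (bil n B lx ly i).
Proof.
  intros Hx Hy. apply (cv_vsum n (fun k j => vsum n (fun p => B i j p * x k j * y k p))).
  intros j Hj. apply (cv_vsum n (fun k p => B i j p * x k j * y k p)). intros p Hp.
  apply CV_mult; [apply CV_mult; [apply cv_const | exact (Hx j Hj)] | exact (Hy p Hp)].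
Qed.

Lemma vec_growing_bounded_cv n (x : nat -> vec) ub :
  (forall k, vle n (x k) (x (S k))) -> (forall k, vle n (x k) ub) ->
  exists L, vle n L ub /\ (forall k, vle n (x k) L) /\
            forall i, (i < n)%nat -> Un_cv (fun k => x k i) (L i).
Proof.
  intros Hgrow Hbd.
  set (L := fun i => epsilon (inhabits 0) (fun l => Un_cv (fun k => x k i) l)).
  assert (HL : forall i, (i < n)%nat -> Un_cv (fun k => x k i) (L i)).
  { intros i Hi. apply (epsilon_spec (inhabits 0) (fun l => Un_cv (fun k => x k i) l)).
    destruct (growing_cv (fun k => x k i)) as [l Hl].
    - intros k. exact (Hgrow k i Hi).
    - exists (ub i). intros r [k ->]. exact (Hbd k i Hi).
    - exists l. exact Hl. }
  exists L. split; [|split; [|exact HL]].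
  - intros i Hi. exact (Rle_cv_lim (fun k => Hbd k i Hi) (HL i Hi) (cv_const (ub i))).
  - intros k i Hi. apply (growing_ineq (fun k => x k i)); [intros m; exact (Hgrow m i Hi) | exact (HL i Hi)].
Qed.

Fixpoint picard_iterate n M a B k : vec :=
  match k with
  | O => vzero
  | S k => let w := picard_iterate n M a B k in solve n M (vadd a (bil n B w w))
  end.

Lemma supersolution_dominates_solution n M a B xh :
  monotone n M -> vle n vzero a -> bil_nonneg n B ->
  vle n vzero xh -> vle n vzero (Fmap n M a B xh) ->
  exists l, is_solution n M a B l /\ vle n l xh.
Proof.
  intros HM Ha HB Hxh HF.
  set (w := picard_iterate n M a B).
  assert (Hw : forall k, veq n (mv n M (w (S k))) (vadd a (bil n B (w k) (w k))))
    by (intros k; apply solve_spec, monotone_nonsingular, HM).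
  assert (Hcmp : forall k u u', vle n vzero (w k) -> vle n (w k) u ->
            (forall i, (i < n)%nat -> a i + bil n B u u i <= mv n M u' i) -> vle n (w (S k)) u').
  { intros k u u' H0 Hu Hu'. apply (monotone_le n M); [exact HM|]. intros i Hi.
    rewrite (Hw k i Hi). unfold vadd.
    pose proof (bil_mono n B (w k) u (w k) u i HB H0 Hu H0 Hu Hi). specialize (Hu' i Hi). lra. }
  assert (HFxh : forall i, (i < n)%nat -> a i + bil n B xh xh i <= mv n M xh i).
  { intros i Hi. specialize (HF i Hi). unfold Fmap, vsub, vzero in HF. lra. }
  assert (Hinv : forall k, vle n vzero (w k) /\ vle n (w k) (w (S k)) /\ vle n (w (S k)) xh).
  { induction k as [|k (H0 & H1 & H2)].
    - assert (Hw0 : vle n vzero (w O)) by exact (vle_refl n vzero).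
      split; [exact Hw0 | split; [|exact (Hcmp O xh xh Hw0 Hxh HFxh)]].
      change (vle n vzero (w 1%nat)). apply HM. intros i Hi. rewrite (Hw O i Hi).
      pose proof (Ha i Hi). pose proof (HB _ _ Hw0 Hw0 i Hi). unfold vadd, vzero in *. lra.
    - assert (H0' : vle n vzero (w (S k))) by exact (vle_trans n _ _ _ H0 H1).
      split; [exact H0' | split; [|exact (Hcmp (S k) xh xh H0' H2 HFxh)]].
      apply (Hcmp k (w (S k))); [exact H0 | exact H1|]. intros i Hi. rewrite (Hw (S k) i Hi). apply Rle_refl. }
  destruct (vec_growing_bounded_cv n w xh (fun k => proj1 (proj2 (Hinv k)))
             (fun k => vle_trans n _ _ _ (proj1 (proj2 (Hinv k))) (proj2 (proj2 (Hinv k)))))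
    as (L & HLxh & HwL & HL).
  exists L. split; [split; [exact (HwL O)|] | exact HLxh].
  intros i Hi. apply (UL_sequence (fun k => mv n M (w (S k)) i)).
  - apply (cv_mv n M (fun k => w (S k))). intros j Hj. exact (cv_shift (fun k => w k j) _ (HL j Hj)).
  - apply (cv_ext (fun k => a i + bil n B (w k) (w k) i)).
    + intros k. symmetry. exact (Hw k i Hi).
    + apply CV_plus; [apply cv_const | apply cv_bil; exact HL].
Qed.

Lemma Fmap_le_at_contact n M a B x y i :
  Zmat n M -> bil_nonneg n B -> vle n vzero x -> vle n x y -> (i < n)%nat -> x i = y i ->
  Fmap n M a B y i <= Fmap n M a B x i.
Proof.
  intros HM HB Hx Hxy Hi Hxi.
  assert (Hd : mv n M (vsub y x) i <= 0).
  { apply vsum_nonpos. intros j Hj. unfold vsub.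
    destruct (Nat.eq_dec i j) as [<-|Hij]; [rewrite Hxi; lra|].
    pose proof (HM i j Hi Hj Hij). pose proof (Hxy j Hj). nra. }
  rewrite mv_vsub in Hd. pose proof (bil_mono n B x y x y i HB Hx Hxy Hx Hxy Hi).
  unfold Fmap, vsub. lra.
Qed.

Fixpoint iterate n N P a B1 B2 (x0 : vec) k : vec :=
  match k with
  | O => x0
  | S k => let y := iterate n N P a B1 B2 x0 k in
           solve n (msub N (bil_r n B1 y)) (vadd (vadd a (mv n P y)) (bil n B2 y y))
  end.

Section Iteration.

Variables (n : nat) (M N P : mat) (a : vec) (B1 B2 : tensor) (xs : vec).
Hypotheses (HM : Zmat n M) (HN : Zmat n N) (HB1 : bil_nonneg n B1) (HB2 : bil_nonneg n B2)
  (HP : mnonneg n P) (HMNP : meq n M (msub N P)) (Ha : vle n vzero a)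
  (Hxs : is_solution n M a (tadd B1 B2) xs) (Hxs_pos : vlt n vzero xs)
  (Hxs_least : forall xh, vle n vzero xh -> vle n vzero (Fmap n M a (tadd B1 B2) xh) ->
               vle n xs xh).

Local Notation F := (Fmap n M a (tadd B1 B2)).
Local Notation iter_mat y := (msub N (bil_r n B1 y)).
Local Notation iter_rhs y := (vadd (vadd a (mv n P y)) (bil n B2 y y)).

Lemma mv_iter_mat y z i :
  (i < n)%nat -> mv n (iter_mat y) z i = mv n M z i + mv n P z i - bil n B1 z y i.
Proof. intros Hi. rewrite mv_msub, mv_bil_r, (mv_split n M N P z i HMNP Hi). reflexivity. Qed.

Lemma iter_mat_Zmat y : vle n vzero y -> Zmat n (iter_mat y).
Proof.
  intros Hy0 i j Hi Hj Hij. pose proof (HN i j Hi Hj Hij).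
  assert (0 <= bil_r n B1 y i j).
  { apply vsum_nonneg. intros k Hk.
    apply Rmult_le_pos; [exact (bil_coef_nonneg n B1 i j k HB1 Hi Hj Hk) | exact (Hy0 k Hk)]. }
  unfold msub. lra.
Qed.

Lemma mv_iter_mat_xs y i : (i < n)%nat ->
  mv n (iter_mat y) xs i = a i + bil n B1 xs (vsub xs y) i + bil n B2 xs xs i + mv n P xs i.
Proof.
  intros Hi. rewrite mv_iter_mat, (proj2 Hxs i Hi), bil_vsub_r by exact Hi.
  unfold vadd. rewrite bil_tadd. ring.
Qed.

Lemma iter_mat_xs_terms_nonneg y i : vle n y xs -> (i < n)%nat ->
  0 <= a i /\ 0 <= bil n B1 xs (vsub xs y) i /\ 0 <= bil n B2 xs xs i /\ 0 <= mv n P xs i.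
Proof.
  intros Hys Hi. destruct Hxs as [Hxs0 _]. split; [exact (Ha i Hi)|split; [|split]].
  - exact (HB1 xs (vsub xs y) Hxs0 (vle_vsub n y xs Hys) i Hi).
  - exact (HB2 xs xs Hxs0 Hxs0 i Hi).
  - exact (mv_nonneg n P xs i HP Hxs0 Hi).
Qed.

Lemma truncated_xs_supersolution y (S : nat -> bool) :
  vle n vzero y -> vle n y xs ->
  (forall i, (i < n)%nat -> S i = true -> mv n (iter_mat y) xs i = 0) ->
  (forall i j, (i < n)%nat -> (j < n)%nat -> S i = true -> S j = false -> iter_mat y i j = 0) ->
  vle n vzero (F (fun j => if S j then 0 else xs j)).
Proof.
  intros Hy0 Hys HAS Hblock. destruct Hxs as [Hxs0 Hxs_eq].
  set (xh := fun j => if S j then 0 else xs j).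
  assert (Hxh0 : vle n vzero xh).
  { intros j Hj. unfold xh, vzero. destruct (S j); [lra | exact (Hxs0 j Hj)]. }
  assert (Hxhs : vle n xh xs).
  { intros j Hj. unfold xh. destruct (S j); [exact (Hxs0 j Hj) | lra]. }
  intros i Hi. unfold vzero. destruct (S i) eqn:HSi.
  - (* every nonnegative term of [(A_y x* )_i] vanishes, hence so do the
       matching terms of [F xh i]. *)
    assert (HAxh : mv n (iter_mat y) xh i = 0).
    { apply vsum_eq0. intros j Hj. unfold xh. destruct (S j) eqn:HSj; [ring|].
      rewrite (Hblock i j Hi Hj HSi HSj). ring. }
    rewrite mv_iter_mat in HAxh by exact Hi.
    pose proof (HAS i Hi HSi) as HAxs. rewrite mv_iter_mat_xs in HAxs by exact Hi.
    destruct (iter_mat_xs_terms_nonneg y i Hys Hi) as (? & ? & ? & ?).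
    pose proof (mv_mono n P xh xs i HP Hxhs Hi).
    pose proof (bil_mono n B2 xh xs xh xs i HB2 Hxh0 Hxhs Hxh0 Hxhs Hi).
    pose proof (bil_mono n B1 xh xs (vsub xs y) (vsub xs y) i HB1 Hxh0 Hxhs
                  (vle_vsub n y xs Hys) (vle_refl n _) Hi).
    pose proof (bil_mono n B1 xh xh xh xs i HB1 Hxh0 (vle_refl n xh) Hxh0 Hxhs Hi).
    pose proof (bil_vsub_r n B1 xh xs y i).
    unfold Fmap, vsub. rewrite bil_tadd. lra.
  - assert (HFxs : F xs i = 0).
    { unfold Fmap, vsub. rewrite (Hxs_eq i Hi). unfold vadd. ring. }
    pose proof (Fmap_le_at_contact n M a (tadd B1 B2) xh xs i HM
                  (bil_nonneg_tadd n B1 B2 HB1 HB2) Hxh0 Hxhs Hi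
                  ltac:(unfold xh; rewrite HSi; reflexivity)).
    lra.
Qed.

Lemma iter_mat_monotone y : vle n vzero y -> vle n y xs -> monotone n (iter_mat y).
Proof.
  intros Hy0 Hys.
  assert (HAxs : vle n vzero (mv n (iter_mat y) xs)).
  { intros i Hi. rewrite mv_iter_mat_xs by exact Hi.
    destruct (iter_mat_xs_terms_nonneg y i Hys Hi) as (? & ? & ? & ?). unfold vzero. lra. }
  intros z Hz. apply NNPP. intros Hneg. apply not_vle0_exists in Hneg.
  destruct (Zmat_null_block n _ xs z (iter_mat_Zmat y Hy0) Hxs_pos HAxs Hz Hneg)
    as [S [[i0 [Hi0 HSi0]] [HAS Hblock]]].
  set (xh := fun j => if S j then 0 else xs j).
  assert (Hxh0 : vle n vzero xh).
  { intros j Hj. unfold xh, vzero. destruct (S j); [lra | exact (proj1 Hxs j Hj)]. }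
  pose proof (Hxs_least xh Hxh0 (truncated_xs_supersolution y S Hy0 Hys HAS Hblock) i0 Hi0)
    as Hcontra.
  pose proof (Hxs_pos i0 Hi0). unfold xh, vzero in *. rewrite HSi0 in Hcontra. lra.
Qed.

Lemma iteration_step y z :
  vle n vzero y -> vle n y xs -> vle n (F y) vzero ->
  veq n (mv n (iter_mat y) z) (iter_rhs y) ->
  vle n y z /\ vle n z xs /\ vle n (F z) vzero.
Proof.
  intros Hy0 Hys HFy Hz. destruct Hxs as [Hxs0 Hxs_eq].
  assert (Hmono := iter_mat_monotone y Hy0 Hys).
  assert (Hyz : vle n y z).
  { apply (monotone_le n _ _ _ Hmono). intros i Hi.
    rewrite mv_iter_mat, (Hz i Hi) by exact Hi. specialize (HFy i Hi).
    unfold Fmap, vsub, vadd, vzero in *. rewrite bil_tadd in HFy. lra. }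
  assert (Hz0 : vle n vzero z) by exact (vle_trans n _ _ _ Hy0 Hyz).
  split; [exact Hyz | split].
  - apply (monotone_le n _ _ _ Hmono). intros i Hi.
    rewrite (Hz i Hi), mv_iter_mat, (Hxs_eq i Hi) by exact Hi. unfold vadd. rewrite bil_tadd.
    pose proof (mv_mono n P y xs i HP Hys Hi).
    pose proof (bil_mono n B1 xs xs y xs i HB1 Hxs0 (vle_refl n xs) Hy0 Hys Hi).
    pose proof (bil_mono n B2 y xs y xs i HB2 Hy0 Hys Hy0 Hys Hi). lra.
  - intros i Hi. pose proof (Hz i Hi) as Hzi. rewrite mv_iter_mat in Hzi by exact Hi.
    unfold Fmap, vsub, vadd, vzero in *. rewrite bil_tadd.
    pose proof (mv_mono n P y z i HP Hyz Hi).
    pose proof (bil_mono n B1 z z y z i HB1 Hz0 (vle_refl n z) Hy0 Hyz Hi).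
    pose proof (bil_mono n B2 y z y z i HB2 Hy0 Hyz Hy0 Hyz Hi). lra.
Qed.

Lemma iterate_is_iteration x0 :
  vle n vzero x0 -> vle n x0 xs -> vle n (F x0) vzero ->
  is_iteration n N P a B1 B2 x0 (iterate n N P a B1 B2 x0).
Proof.
  intros H0 Hs HF.
  assert (Hsolve : forall k, let y := iterate n N P a B1 B2 x0 k in
            vle n vzero y -> vle n y xs ->
            veq n (mv n (iter_mat y) (iterate n N P a B1 B2 x0 (S k))) (iter_rhs y)).
  { intros k y Hy0 Hys. apply solve_spec, monotone_nonsingular, iter_mat_monotone; assumption. }
  assert (Hgood : forall k, let y := iterate n N P a B1 B2 x0 k in
            vle n vzero y /\ vle n y xs /\ vle n (F y) vzero).
  { induction k as [|k (Hk0 & Hks & HkF)]; [split; [|split]; assumption|].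
    destruct (iteration_step _ _ Hk0 Hks HkF (Hsolve k Hk0 Hks)) as (Hle & Hs' & HF').
    split; [exact (vle_trans n _ _ _ Hk0 Hle) | split; assumption]. }
  split; [intros i _; reflexivity|].
  intros k. destruct (Hgood k) as (Hk0 & Hks & _). exact (Hsolve k Hk0 Hks).
Qed.

Lemma iteration_invariant x0 x :
  vle n vzero x0 -> vle n x0 xs -> vle n (F x0) vzero -> is_iteration n N P a B1 B2 x0 x ->
  forall k, vle n vzero (x k) /\ vle n (x k) xs /\ vle n (F (x k)) vzero.
Proof.
  intros H0 Hs HF [Hx0 Hstep]. induction k as [|k (Hk0 & Hks & HkF)].
  - split; [|split]; intros i Hi.
    + rewrite (Hx0 i Hi). exact (H0 i Hi).
    + rewrite (Hx0 i Hi). exact (Hs i Hi).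
    + rewrite (Fmap_ext n M a _ _ _ i Hx0). exact (HF i Hi).
  - destruct (iteration_step _ _ Hk0 Hks HkF (Hstep k)) as (Hle & Hs' & HF').
    split; [exact (vle_trans n _ _ _ Hk0 Hle) | split; assumption].
Qed.

Lemma iteration_limit_solves (x : nat -> vec) L :
  (forall j, (j < n)%nat -> Un_cv (fun k => x k j) (L j)) ->
  (forall k, veq n (mv n (iter_mat (x k)) (x (S k))) (iter_rhs (x k))) ->
  veq n (mv n M L) (vadd a (bil n (tadd B1 B2) L L)).
Proof.
  intros HL Hstep i Hi.
  assert (HLS : forall j, (j < n)%nat -> Un_cv (fun k => x (S k) j) (L j))
    by (intros j Hj; exact (cv_shift (fun k => x k j) _ (HL j Hj))).
  assert (Hlim : mv n N L i - bil n B1 L L i = a i + mv n P L i + bil n B2 L L i).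
  { apply (UL_sequence (fun k => mv n (iter_mat (x k)) (x (S k)) i)).
    - apply (cv_ext (fun k => mv n N (x (S k)) i - bil n B1 (x (S k)) (x k) i)).
      + intros k. rewrite mv_msub, mv_bil_r. reflexivity.
      + apply CV_minus; [apply (cv_mv n N (fun k => x (S k))) | apply cv_bil]; assumption.
    - apply (cv_ext (fun k => a i + mv n P (x k) i + bil n B2 (x k) (x k) i)).
      + intros k. symmetry. exact (Hstep k i Hi).
      + apply CV_plus; [apply CV_plus; [apply cv_const | apply cv_mv] | apply cv_bil]; assumption. }
  rewrite (mv_split n M N P L i HMNP Hi) in Hlim. unfold vadd. rewrite bil_tadd. lra.
Qed.

Lemma iteration_cv (x : nat -> vec) :
  (forall k, vle n (x k) (x (S k))) -> (forall k, vle n vzero (x k) /\ vle n (x k) xs) ->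
  (forall k, veq n (mv n (iter_mat (x k)) (x (S k))) (iter_rhs (x k))) ->
  forall i, (i < n)%nat -> Un_cv (fun k => x k i) (xs i).
Proof.
  intros Hgrow Hbd Hstep.
  destruct (vec_growing_bounded_cv n x xs Hgrow (fun k => proj2 (Hbd k))) as (L & HLxs & HxL & HL).
  pose proof (iteration_limit_solves x L HL Hstep) as HLsol.
  assert (HFL : vle n vzero (F L)).
  { intros i Hi. unfold Fmap, vsub, vzero. rewrite (HLsol i Hi). unfold vadd. lra. }
  pose proof (Hxs_least L (vle_trans n _ _ _ (proj1 (Hbd O)) (HxL O)) HFL) as HxsL.
  intros i Hi. replace (xs i) with (L i) by (pose proof (HxsL i Hi); pose proof (HLxs i Hi); lra).
  exact (HL i Hi).
Qed.

Theorem iteration_correct x0 :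
  vle n vzero x0 -> vle n x0 xs -> vle n (F x0) vzero ->
  (exists x : nat -> vec, is_iteration n N P a B1 B2 x0 x) /\
  (forall x : nat -> vec, is_iteration n N P a B1 B2 x0 x ->
     (forall k, nonsingular n (iter_mat (x k))) /\
     (forall k, vle n (x k) (x (S k)) /\ vle n (x (S k)) xs) /\
     (forall i, (i < n)%nat -> Un_cv (fun k => x k i) (xs i)) /\
     (forall k, vle n (F (x k)) vzero)).
Proof.
  intros H0 Hs HF. split; [eexists; exact (iterate_is_iteration x0 H0 Hs HF)|].
  intros x Hx. pose proof (iteration_invariant x0 x H0 Hs HF Hx) as Hgood.
  assert (Hord : forall k, vle n (x k) (x (S k)) /\ vle n (x (S k)) xs).
  { intros k. destruct (Hgood k) as (Hk0 & Hks & HkF).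
    destruct (iteration_step _ _ Hk0 Hks HkF (proj2 Hx k)) as (Hle & Hs' & _).
    split; assumption. }
  split; [|split; [exact Hord | split]].
  - intros k. destruct (Hgood k) as (Hk0 & Hks & _).
    exact (monotone_nonsingular n _ (iter_mat_monotone _ Hk0 Hks)).
  - apply iteration_cv; [intros k; apply Hord | intros k; split; apply Hgood | exact (proj2 Hx)].
  - intros k. apply Hgood.
Qed.

End Iteration.

Theorem mainTheorem9 (n : nat) (M N P : mat) (a : vec) (B1 B2 : tensor)
    (xs x0 : vec) :
  is_M_matrix n M -> nonsingular n M -> vle n vzero a ->
  bil_nonneg n B1 -> bil_nonneg n B2 ->
  hypH n M a (tadd B1 B2) xs ->
  is_M_matrix n N -> mnonneg n P -> meq n M (msub N P) ->
  vle n vzero x0 -> vle n x0 xs -> vle n (Fmap n M a (tadd B1 B2) x0) vzero ->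
  (exists x : nat -> vec, is_iteration n N P a B1 B2 x0 x) /\
  (forall x : nat -> vec, is_iteration n N P a B1 B2 x0 x ->
     (forall k, nonsingular n (msub N (bil_r n B1 (x k)))) /\
     (forall k, vle n (x k) (x (S k)) /\ vle n (x (S k)) xs) /\
     (forall i, (i < n)%nat -> Un_cv (fun k => x k i) (xs i)) /\
     (forall k, vle n (Fmap n M a (tadd B1 B2) (x k)) vzero)).
Proof.
  intros HMm HMns Ha HB1 HB2 [[Hxs Hmin] [Hxs_pos _]] HNm HP HMNP Hx0 Hx0s HFx0.
  pose proof (is_M_matrix_Zmat n M HMm) as HZM.
  pose proof (is_M_matrix_Zmat n N HNm) as HZN.
  pose proof (bil_nonneg_tadd n B1 B2 HB1 HB2) as HB.
  assert (HMmono : monotone n M).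
  { apply (nonsingular_Zmat_monotone n M xs HZM HMns Hxs_pos). intros i Hi.
    rewrite (proj2 Hxs i Hi). pose proof (Ha i Hi).
    pose proof (HB xs xs (proj1 Hxs) (proj1 Hxs) i Hi). unfold vadd, vzero in *. lra. }
  assert (Hleast : forall xh, vle n vzero xh -> vle n vzero (Fmap n M a (tadd B1 B2) xh) ->
                   vle n xs xh).
  { intros xh Hxh HFxh.
    destruct (supersolution_dominates_solution n M a _ xh HMmono Ha HB Hxh HFxh) as (l & Hl & Hlxh).
    exact (vle_trans n _ _ _ (Hmin l Hl) Hlxh). }
  eapply iteration_correct; eassumption.
Qed.
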